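(* Let $G$ be a finite group and consider a stem extension $\{e\}\to M(G)\xrightarrow{\iota}\tilde{G}\xrightarrow{\pi}G\to\{e\}$ with $\tilde G$ a Schur cover of $G$. Let $H$ be a proper subgroup of $G$ such that $M(H)\cong M(G)$ and $\iota(M(G))\subseteq[\pi^{-1}(H),\pi^{-1}(H)]$. Then the subgraph of $\Delta_D(G)$ induced by $H$ equals $\Delta_D(H)$.
   Context: $M(G)$ denotes the Schur multiplier of $G$. A stem extension of $G$ is a central extension $\{e\}\to N\xrightarrow{\iota}\hat{G}\xrightarrow{\pi}G\to\{e\}$ with $\iota(N)\subseteq Z(\hat{G})\cap[\hat{G},\hat{G}]$; a Schur cover is a stem extension of maximal order (its kernel is $M(G)$). The deep commuting graph $\Delta_D(G)$ is the simple graph with vertex set $G$ in which two distinct vertices are adjacent if and only if their preimages under the projection from a Schur cover commute in that Schur cover (independent of the choice of Schur cover and preimages). *)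

From HB Require Import structures.
From mathcomp Require Import all_boot all_fingroup all_solvable.

Set Implicit Arguments.
Unset Strict Implicit.
Unset Printing Implicit Defensive.

Local Open Scope group_scope.

(* A stem extension of G: a finite group Gt (in any finGroupType tT) with a
   morphism pi from Gt onto G whose kernel (= iota(N)) lies in Z(Gt) ∩ [Gt,Gt]. *)
Definition stem_ext (gT tT : finGroupType) (G : {group gT}) (Gt : {group tT})
    (pi : {morphism Gt >-> gT}) : bool :=
  (pi @* Gt == G) && ('ker pi \subset 'Z(Gt) :&: Gt^`(1)).

(* A Schur cover: a stem extension whose kernel has maximal order among all
   stem extensions of G (in all finite group types). Its kernel is M(G). *)
Definition schur_cover (gT tT : finGroupType) (G : {group gT}) (Gt : {group tT})
    (pi : {morphism Gt >-> gT}) : Prop :=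
  stem_ext G pi /\
  forall (rT : finGroupType) (R : {group rT}) (f : {morphism R >-> gT}),
    stem_ext G f -> #|'ker f| <= #|'ker pi|.

(* Adjacency in the deep commuting graph Delta_D(G): x, y distinct vertices of
   G whose preimages commute in a Schur cover (stated for every Schur cover and
   every choice of preimages; the paper notes independence of these choices). *)
Definition deep_adj (gT : finGroupType) (G : {group gT}) (x y : gT) : Prop :=
  [/\ x \in G, y \in G, x != y &
      forall (tT : finGroupType) (Gt : {group tT}) (pi : {morphism Gt >-> gT}),
        schur_cover G pi ->
        forall a b : tT, a \in Gt -> b \in Gt -> pi a = x -> pi b = y ->
          commute a b].

(* A central extension p : E ->> X with kernel A gives a stem extension of X
   with kernel of order #|A :&: E'|: embed A into an abelian group C mapping
   onto E/E', compatibly with A -> E/E' and without enlarging its kernel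
   (adjoining one cyclic group at a time), pull E back along C ->> E/E' and
   factor out the graph of the embedding.
   Hence, for a Schur cover p1 : E1 ->> X and any central extension
   p2 : E2 ->> X, the first projection of the fibre product P of E1 and E2
   over X is injective on ker :&: P', which it maps onto ker p1 <= E1'.  The
   commutator of two lifts (a1, a2), (b1, b2) with [a1, b1] = 1 lies there, so
   [a2, b2] = 1: deep adjacency can be read in any single Schur cover.
   Finally pi^-1(H) ->> H is a stem extension whose kernel has order
   |M(G)| = |M(H)|, so it is a Schur cover of H, and the lifts to G~ of
   elements of H are exactly their lifts to pi^-1(H). *)

From HB Require Import structures.
From mathcomp Require Import all_boot all_fingroup all_solvable zmodp.

Set Implicit Arguments.
Unset Strict Implicit.
Unset Printing Implicit Defensive.

Local Open Scope group_scope.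

Lemma expg_pair (gT1 gT2 : finGroupType) (x : gT1) (y : gT2) n :
  (x, y) ^+ n = (x ^+ n, y ^+ n).
Proof. by elim: n => // n IHn; rewrite !expgS IHn. Qed.

Definition abelian_lift (aT cT vT : finGroupType) (A : {group aT})
    (C : {group cT}) (alpha : {morphism A >-> vT})
    (lam : {morphism A >-> cT}) (psi : {morphism C >-> vT}) : Prop :=
  [/\ abelian C, lam @* A \subset C, 'injm lam, 'ker psi = lam @* 'ker alpha
    & {in A, forall a, psi (lam a) = alpha a}].

Lemma abelian_lift_id (aT vT : finGroupType) (A : {group aT})
    (alpha : {morphism A >-> vT}) :
  abelian A -> abelian_lift alpha (idm_morphism A) alpha.
Proof.
move=> abA; split=> //; rewrite ?morphim_idm ?injm_idm //.
exact: morphpre_sub.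
Qed.

Lemma abelian_lift_trans (aT bT cT vT : finGroupType) (A : {group aT})
    (B : {group bT}) (C : {group cT}) (alpha : {morphism A >-> vT})
    (lam1 : {morphism A >-> bT}) (psi1 : {morphism B >-> vT})
    (lam2 : {morphism B >-> cT}) (psi2 : {morphism C >-> vT}) :
  abelian_lift alpha lam1 psi1 -> abelian_lift psi1 lam2 psi2 ->
  exists lam : {morphism A >-> cT}, abelian_lift alpha lam psi2.
Proof.
move=> [_ sAB inj1 ker1 comp1] [abC sBC inj2 ker2 comp2].
have sA : A \subset lam1 @*^-1 B by rewrite -sub_morphim_pre.
exists (restrm_morphism sA [morphism of lam2 \o lam1]); split=> //.
- rewrite morphim_restrm setIid morphim_comp.
  exact: subset_trans (morphimS _ sAB) sBC.
- by rewrite injm_restrm // injm_comp.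
- rewrite ker2 ker1 restrmEsub ?morphim_comp //.
  exact: morphpre_sub.
- move=> a aA /=; rewrite comp2 ?comp1 //.
  by apply: (subsetP sAB); rewrite mem_morphim.
Qed.

Section AbelianLiftStep.

Variables (aT vT : finGroupType) (A : {group aT}) (V : {group vT}).
Variable alpha : {morphism A >-> vT}.
Hypotheses (abA : abelian A) (abV : abelian V) (sAV : alpha @* A \subset V).

Variables (v : vT) (a0 : aT) (k : nat).
Hypotheses (vV : v \in V) (vNA : v \notin alpha @* A) (k_gt0 : 0 < k).
Hypotheses (a0A : a0 \in A) (alpha_a0 : alpha a0 = v ^+ k).
Hypothesis dvd_k : forall j, v ^+ j \in alpha @* A -> k %| j.

(* Adjoin to A a cyclic group <z> of order m = k #[a0] and identify z ^+ k
   with a0; then (a, z ^+ i) |-> alpha a * v ^+ i is well defined. *)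
Let m := (k * #[a0])%N.

Let z : 'I_m.-1.+1 := Zp1.

Let order_z : #[z] = m.
Proof. by rewrite order_Zp1 prednK // muln_gt0 k_gt0 order_gt0. Qed.

Let order_v_dvd : #[v] %| #[z].
Proof.
by rewrite order_z order_dvdn expgM -alpha_a0 -morphX // expg_order morph1.
Qed.

Let el := eltm order_v_dvd.

Let elE i : el (z ^+ i) = v ^+ i.
Proof. exact: eltmE. Qed.

Let P := setX_group A <[z]>%G.

Let abP : abelian P.
Proof.
apply/centsP=> [[x1 x2]] /setXP[/= x1A x2Z] [y1 y2] /setXP[/= y1A y2Z].
by congr (_, _); [apply: (centsP abA) | apply: (centsP (cycle_abelian z))].
Qed.

Let g : aT * 'I_m.-1.+1 := (a0^-1, z ^+ k).

Let N := <[g]>%G.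

Let nNP : P \subset 'N(N).
Proof.
apply: cents_norm; apply: subset_trans abP (centS _).
by rewrite cycle_subG inE /= groupV a0A mem_cycle.
Qed.

Let elV w : w \in <[z]> -> el w \in V.
Proof. by case/cycleP=> i ->; rewrite elE groupX. Qed.

Let alphaV a : a \in A -> alpha a \in V.
Proof. by move=> aA; apply: (subsetP sAV); rewrite mem_morphim. Qed.

Definition lift_step_map (q : aT * 'I_m.-1.+1) := alpha q.1 * el q.2.

Lemma lift_step_map_morphM : {in P &, {morph lift_step_map : x y / x * y}}.
Proof.
move=> [x1 x2] [y1 y2] /setXP[/= x1A x2Z] /setXP[/= y1A y2Z].
rewrite /lift_step_map /= morphM // /el (eltmM order_v_dvd) // -/el.
have cxy : commute (el x2) (alpha y1).
  by apply: (centsP abV); rewrite ?elV ?alphaV.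
by rewrite -!mulgA; congr (_ * _); rewrite !mulgA cxy.
Qed.

Canonical lift_step_morphism := Morphism lift_step_map_morphM.

Let kerN : 'ker (coset N) \subset 'ker lift_step_map.
Proof.
rewrite ker_coset cycle_subG; apply/kerP.
  by rewrite inE /= groupV a0A mem_cycle.
by rewrite /= /lift_step_map /= morphV // alpha_a0 elE mulVg.
Qed.

Definition lift_step_psi := factm kerN nNP.

Let pa1 a : a \in A -> (a, 1) \in P.
Proof. by move=> aA; rewrite inE /= aA group1. Qed.

Definition lift_step_lam (a : aT) := coset N (a, 1).

Lemma lift_step_lam_morphM : {in A &, {morph lift_step_lam : x y / x * y}}.
Proof.
move=> x y xA yA; rewrite /lift_step_lam -morphM ?(subsetP nNP) ?pa1 //.
by congr (coset N _); congr (_, _); rewrite mulg1.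
Qed.

Canonical lift_step_lam_morphism := Morphism lift_step_lam_morphM.

Let injm_lam : 'injm lift_step_lam.
Proof.
apply/subsetP=> a aK; have aA := dom_ker aK.
have /cycleP[i] : (a, 1) \in N.
  by apply: coset_idr; [rewrite (subsetP nNP) ?pa1 | exact: (mker aK)].
rewrite expg_pair => -[-> zki].
have : m %| k * i by rewrite -order_z order_dvdn expgM -zki.
rewrite dvdn_pmul2l // order_dvdn => /eqP a0i.
by rewrite inE expgVn a0i invg1.
Qed.

Let lift_step_comp a : a \in A -> lift_step_psi (lift_step_lam a) = alpha a.
Proof.
move=> aA; rewrite /lift_step_lam /lift_step_psi factmE ?pa1 //.
by rewrite /= /lift_step_map /= (elE 0) mulg1.
Qed.

Let ker_lift_step : 'ker lift_step_psi = lift_step_lam @* 'ker alpha.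
Proof.
rewrite ker_factm; apply/eqP; rewrite eqEsubset; apply/andP; split; last first.
  apply/subsetP=> _ /morphimP[d _ dK ->]; have dA := dom_ker dK.
  rewrite /= /lift_step_lam mem_morphim ?(subsetP nNP) ?pa1 //.
  by apply/kerP; rewrite ?pa1 //= /lift_step_map /= (mker dK) (elE 0) mulg1.
apply/subsetP=> _ /morphimP[[a w] _ qK ->].
have /setXP[/= aA /cycleP[j wj]] := dom_ker qK.
have := mker qK; rewrite /= /lift_step_map /= wj elE => avj.
have /dvdnP[i ji] : k %| j.
  apply: dvd_k; rewrite (_ : v ^+ j = (alpha a)^-1) ?groupV ?mem_morphim //.
  by apply/eqP; rewrite eq_sym eq_invg_mul avj.
set d := a * a0 ^+ i.
have dK : d \in 'ker alpha.
  by apply/kerP; rewrite ?groupM ?groupX // morphM ?groupX // morphX // alpha_a0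
    -expgM mulnC -ji.
have gi : g ^+ i \in N by rewrite mem_cycle.
have -> : (a, z ^+ j) = (d, 1) * g ^+ i.
  rewrite expg_pair /d; congr (_, _); first by rewrite /= expgVn mulgK.
  by rewrite /= mul1g -expgM ji mulnC.
by rewrite coset_kerr // (mem_morphim lift_step_lam_morphism (dom_ker dK) dK).
Qed.

Lemma abelian_lift_step :
  exists (bT : finGroupType) (B : {group bT}) (lam : {morphism A >-> bT})
         (psi : {morphism B >-> vT}),
  [/\ abelian_lift alpha lam psi, psi @* B \subset V
    & #|alpha @* A| < #|psi @* B|].
Proof.
exists _, (P / N)%G, lift_step_lam_morphism, [morphism of lift_step_psi].
have sAB : lift_step_lam @* A \subset P / N.
  apply/subsetP=> _ /morphimP[a _ aA ->].
  by rewrite /= /lift_step_lam mem_quotient ?pa1.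
rewrite morphim_factm; split; first by split; rewrite ?morphim_abelian.
- apply/subsetP=> _ /morphimP[[a w] _ /setXP[/= aA wZ] ->].
  by rewrite /= /lift_step_map groupM ?alphaV ?elV.
- apply: proper_card; rewrite properEneq; apply/andP; split.
    apply: contraNneq vNA => ->; apply/morphimP.
    exists (1, z); rewrite ?inE ?group1 ?cycle_id //.
    by rewrite /= /lift_step_map /= morph1 mul1g (elE 1).
  apply/subsetP=> _ /morphimP[a _ aA ->]; apply/morphimP.
  exists (a, 1); rewrite ?pa1 //.
  by rewrite /= /lift_step_map /= (elE 0) mulg1.
Qed.

End AbelianLiftStep.

Lemma abelian_lift_onto (aT vT : finGroupType) (A : {group aT}) (V : {group vT})
    (alpha : {morphism A >-> vT}) :
  abelian A -> abelian V -> alpha @* A \subset V ->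
  exists (cT : finGroupType) (C : {group cT}) (lam : {morphism A >-> cT})
         (psi : {morphism C >-> vT}),
  abelian_lift alpha lam psi /\ psi @* C = V.
Proof.
move: {2}(#|V| - #|alpha @* A|).+1 (ltnSn (#|V| - #|alpha @* A|)) => n.
elim: n aT A alpha => // n IHn aT A alpha lt_n abA abV sAV.
have [eAV | neAV] := eqVneq (alpha @* A) V.
  by exists aT, A, (idm_morphism A), alpha; split; first exact: abelian_lift_id.
have [v vV vNA] : exists2 v, v \in V & v \notin alpha @* A.
  by apply/subsetPn; rewrite eqEsubset sAV in neAV.
have nV : v \in 'N(alpha @* A).
  by apply: (subsetP (cents_norm _)) vV; rewrite centsC (subset_trans sAV).
have /morphimP[a0 _ a0A alpha_a0] : v ^+ #[coset (alpha @* A) v] \in alpha @* A.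
  by apply: coset_idr; rewrite ?groupX // morphX // expg_order.
have dvd_k j : v ^+ j \in alpha @* A -> #[coset (alpha @* A) v] %| j.
  by move=> vjA; rewrite order_dvdn -morphX //; apply/eqP; exact: coset_id.
have [bT [B [lam1 [psi1 [lift1 sBV growth]]]]] :=
  abelian_lift_step abA abV sAV vV vNA (order_gt0 _) a0A (esym alpha_a0) dvd_k.
have [abB _ _ _ _] := lift1.
have lt_n1 : #|V| - #|psi1 @* B| < n.
  apply: leq_trans (_ : _ < #|V| - #|alpha @* A|) _; last by rewrite -ltnS.
  exact: ltn_sub2l (leq_trans growth (subset_leq_card sBV)) growth.
have [cT [C [lam2 [psi2 [lift2 onto2]]]]] := IHn _ _ _ lt_n1 abB abV sBV.
have [lam lift] := abelian_lift_trans lift1 lift2.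
by exists cT, C, lam, psi2.
Qed.

Section Pullback.

Variables (gT t1 t2 : finGroupType) (E1 : {group t1}) (E2 : {group t2}).
Variables (p1 : {morphism E1 >-> gT}) (p2 : {morphism E2 >-> gT}).

Definition pullback := [set q in setX E1 E2 | p1 q.1 == p2 q.2].

Lemma pullbackP q :
  reflect [/\ q.1 \in E1, q.2 \in E2 & p1 q.1 = p2 q.2] (q \in pullback).
Proof.
rewrite !inE; apply: (iffP idP) => [/andP[/andP[-> ->] /eqP] // | [-> -> ->]].
by rewrite eqxx.
Qed.

Lemma group_set_pullback : group_set pullback.
Proof.
apply/group_setP; split; first by apply/pullbackP; rewrite /= !group1 !morph1.
move=> [x1 x2] [y1 y2] /pullbackP[/= x1E x2E ex] /pullbackP[/= y1E y2E ey].
by apply/pullbackP; rewrite /= !groupM // !morphM // ex ey.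
Qed.

Canonical pullback_group := Group group_set_pullback.

Lemma morphim_fst_pullback :
  p1 @* E1 \subset p2 @* E2 -> [morphism of @fst t1 t2] @* pullback = E1.
Proof.
move=> sIm; apply/eqP; rewrite eqEsubset; apply/andP; split.
  by apply/subsetP=> _ /morphimP[q _ /pullbackP[q1E _ _] ->].
apply/subsetP=> x xE.
have /morphimP[y _ yE e] := subsetP sIm _ (mem_morphim p1 xE xE).
by apply/morphimP; exists (x, y); rewrite ?in_setT //; apply/pullbackP.
Qed.

Lemma pullback_cent q :
  q.1 \in 'Z(E1) -> q.2 \in 'Z(E2) -> q \in 'C(pullback).
Proof.
case: q => [x1 x2] /centerP[_ cx1] /centerP[_ cx2].
apply/centP=> -[y1 y2] /pullbackP[/= y1E y2E _].
by congr (_, _); [apply: cx1 | apply: cx2].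
Qed.

Lemma mem_der_pullback y :
  p1 @* E1 \subset p2 @* E2 -> abelian E2 ->
  y \in E1^`(1) -> (y, 1) \in pullback^`(1).
Proof.
move=> sIm abE2; rewrite -(morphim_fst_pullback sIm) -morphim_der ?subsetT //.
case/morphimP=> -[x z] _ xz'P ->.
have sndP : [morphism of @snd t1 t2] @* pullback \subset E2.
  by apply/subsetP=> _ /morphimP[r _ /pullbackP[_ r2E _] ->].
have : z \in E2^`(1).
  apply: subsetP (dergS 1 sndP) _ _.
  rewrite -morphim_der ?subsetT //.
  exact: (mem_morphim [morphism of @snd t1 t2] (in_setT _) xz'P).
by rewrite derg1 (commG1P abE2) => /set1P <-.
Qed.

Variables (rT : finGroupType) (f : {morphism E1 >-> rT}).

Definition pullback_fst (q : t1 * t2) := f q.1.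

Lemma pullback_fst_morphM : {in pullback &, {morph pullback_fst : x y / x * y}}.
Proof.
by move=> x y /pullbackP[xE _ _] /pullbackP[yE _ _]; rewrite /pullback_fst morphM.
Qed.

Canonical pullback_fst_morphism := Morphism pullback_fst_morphM.

Lemma morphim_pullback_fst :
  p1 @* E1 \subset p2 @* E2 -> pullback_fst @* pullback = f @* E1.
Proof.
move/morphim_fst_pullback=> fstP; apply/eqP; rewrite eqEsubset.
apply/andP; split; apply/subsetP=> _ /morphimP[q _ qP ->].
  by case/pullbackP: qP => q1E _ _; rewrite /= /pullback_fst mem_morphim.
have /morphimP[r _ rP ->] : q \in [morphism of @fst t1 t2] @* pullback.
  by rewrite fstP.
exact: (mem_morphim pullback_fst_morphism rP rP).
Qed.

End Pullback.

Section CentralExtensionStem.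

Variables (gT eT : finGroupType) (X : {group gT}) (E : {group eT}).
Variable p : {morphism E >-> gT}.
Hypotheses (pE : p @* E = X) (kerZ : 'ker p \subset 'Z(E)).

Let A := 'ker p.

Let sAE : A \subset E := morphpre_sub _ _.

Let nE'A : A \subset 'N(E^`(1)).
Proof. exact: subset_trans sAE (der_norm 1 E). Qed.

Let eps := restrm_morphism (der_norm 1 E) (coset_morphism E^`(1)).
Let alpha := restrm_morphism nE'A (coset_morphism E^`(1)).

Let ker_alpha : 'ker alpha = A :&: E^`(1).
Proof. by rewrite ker_restrm ker_coset. Qed.

Section Construction.

Variables (cT : finGroupType) (C : {group cT}) (lam : {morphism A >-> cT}).
Variable psi : {morphism C >-> coset_of E^`(1)}.
Hypotheses (liftA : abelian_lift alpha lam psi) (psiC : psi @* C = E / E^`(1)).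

Let S := pullback_group eps psi.
Let f0 := pullback_fst_morphism eps psi p.

Definition graph_lam (a : eT) := (a, lam a).

Lemma graph_lam_morphM : {in A &, {morph graph_lam : x y / x * y}}.
Proof. by move=> x y xA yA; rewrite /graph_lam morphM. Qed.

Canonical graph_lam_morphism := Morphism graph_lam_morphM.

Let Gam := (graph_lam @* A)%G.
Let B := setX_group [1 eT]%G ('ker psi)%G.

Let sGam_kerf0 : Gam \subset 'ker f0.
Proof.
have [_ sAC _ _ comp] := liftA.
apply/subsetP=> _ /morphimP[a _ aA ->]; have aE := subsetP sAE a aA.
apply/kerP; last by rewrite /= /pullback_fst /= (mker aA).
apply/pullbackP; split=> //=; last by rewrite comp.
by rewrite (subsetP sAC) ?mem_morphim.
Qed.

Let kerf0Z : 'ker f0 \subset 'Z(S).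
Proof.
have [abC _ _ _ _] := liftA.
apply/subsetP=> q qK; have qS := dom_ker qK; rewrite inE qS.
have [_ q2C _] := pullbackP _ _ _ qS.
apply: pullback_cent; last by rewrite (center_idP abC).
by apply: (subsetP kerZ); apply/kerP; [case/pullbackP: qS | exact: (mker qK)].
Qed.

Let nGamS : S \subset 'N(Gam).
Proof.
apply: cents_norm; rewrite centsC.
exact: subset_trans sGam_kerf0 (subset_trans kerf0Z (subsetIr _ _)).
Qed.

Let kerf0E : 'ker f0 = Gam * B.
Proof.
have [_ sAC _ _ comp] := liftA.
apply/eqP; rewrite eqEsubset; apply/andP; split; last first.
  apply: mul_subG sGam_kerf0 _; apply/subsetP=> -[_ c] /setXP[/set1P -> cK].
  have cC := dom_ker cK.
  apply/kerP; last by rewrite /= /pullback_fst morph1.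
  by apply/pullbackP; rewrite /= group1 (mker cK) morph1.
apply/subsetP=> -[a c] qK; have /pullbackP[/= aE cC eac] := dom_ker qK.
have aA : a \in A by apply/kerP => //; apply: (mker qK).
have laC : lam a \in C by rewrite (subsetP sAC) ?mem_morphim.
have -> : (a, c) = graph_lam a * (1, (lam a)^-1 * c).
  by rewrite /graph_lam; congr (_, _); rewrite /= ?mulg1 ?mulKVg.
rewrite mem_mulg ?mem_morphim //.
rewrite inE /= group1; apply/kerP; rewrite ?groupM ?groupV //.
by rewrite morphM ?groupV // morphV // comp // -eac mulVg.
Qed.

Let sB_der : B \subset S^`(1) * Gam.
Proof.
have [abC _ _ kerpsi _] := liftA.
have sIm : eps @* E \subset psi @* C by rewrite psiC morphim_restrm setIid.
apply/subsetP=> -[_ c] /setXP[/set1P -> /=].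
rewrite kerpsi ker_alpha => /morphimP[d _ /setIP[dA dE'] ->].
have -> : (1, lam d) = (d^-1, 1) * graph_lam d.
  by rewrite /graph_lam; congr (_, _); rewrite /= ?mulVg ?mul1g.
rewrite mem_mulg ?mem_morphim //.
by apply: mem_der_pullback; rewrite ?groupV.
Qed.

Let tiGamB : Gam :&: B = 1.
Proof.
apply/trivgP/subsetP=> _ /setIP[/morphimP[a _ aA ->]].
rewrite inE /= => /andP[/set1P a1 _].
by rewrite /graph_lam a1 morph1; apply/set1P.
Qed.

Lemma pullback_quotient_stem :
  exists (rT : finGroupType) (Y : {group rT}) (f : {morphism Y >-> gT}),
    stem_ext X f /\ #|'ker f| = #|A :&: E^`(1)|.
Proof.
have [_ _ injlam kerpsi _] := liftA.
have kerGam : 'ker (coset Gam) \subset 'ker f0 by rewrite ker_coset.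
have sBker : B \subset 'ker f0 by rewrite kerf0E mulG_subr.
have nGamB : B \subset 'N(Gam).
  exact: subset_trans (subset_trans sBker (morphpre_sub _ _)) nGamS.
have kerfE : 'ker (factm kerGam nGamS) = B / Gam.
  by rewrite ker_factm kerf0E -quotientE quotientMidl.
exists _, (S / Gam)%G, (factm_morphism kerGam nGamS); split.
  rewrite /stem_ext subsetI; apply/and3P; split.
  - rewrite morphim_factm morphim_pullback_fst ?pE //.
    by rewrite psiC morphim_restrm setIid.
  - rewrite ker_factm; apply: subset_trans (morphimS _ kerf0Z) _.
    exact: morphim_center.
  - rewrite kerfE -quotient_der //; apply: subset_trans (quotientS _ sB_der) _.
    by rewrite quotientMidr.
rewrite kerfE -(card_isog (quotient_isog nGamB tiGamB)) cardsX cards1 mul1n.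
by rewrite /= kerpsi card_injm ?ker_alpha ?subsetIl.
Qed.

End Construction.

Lemma central_ext_stem :
  exists (rT : finGroupType) (Y : {group rT}) (f : {morphism Y >-> gT}),
    stem_ext X f /\ #|'ker f| = #|'ker p :&: E^`(1)|.
Proof.
have abA : abelian A := abelianS kerZ (center_abelian E).
have abV : abelian (E / E^`(1)) := sub_der1_abelian (subxx _).
have sAV : alpha @* A \subset E / E^`(1).
  by rewrite morphim_restrm setIid morphimS.
have [cT [C [lam [psi [liftA psiC]]]]] := abelian_lift_onto abA abV sAV.
exact: pullback_quotient_stem liftA psiC.
Qed.

End CentralExtensionStem.

Lemma schur_cover_central (gT tT : finGroupType) (X : {group gT})
    (E : {group tT}) (p : {morphism E >-> gT}) :
  schur_cover X p -> p @* E = X /\ 'ker p \subset 'Z(E).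
Proof.
case=> /andP[/eqP pE /subset_trans kerZ] _.
by split=> //; apply: kerZ; apply: subsetIl.
Qed.

Lemma schur_cover_card_ker_der (gT t1 t2 : finGroupType) (X : {group gT})
    (E1 : {group t1}) (p1 : {morphism E1 >-> gT})
    (E : {group t2}) (p : {morphism E >-> gT}) :
  schur_cover X p1 -> p @* E = X -> 'ker p \subset 'Z(E) ->
  #|'ker p :&: E^`(1)| <= #|'ker p1|.
Proof.
move=> [_ max_p1] pE kerZ.
have [rT [Y [f [stf <-]]]] := central_ext_stem pE kerZ.
exact: max_p1 stf.
Qed.

Section SchurCoverCommute.

Variables (gT t1 t2 : finGroupType) (X : {group gT}).
Variables (E1 : {group t1}) (p1 : {morphism E1 >-> gT}).
Variables (E2 : {group t2}) (p2 : {morphism E2 >-> gT}).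
Hypotheses (scp1 : schur_cover X p1) (p2E : p2 @* E2 = X).
Hypothesis kerZ2 : 'ker p2 \subset 'Z(E2).

Let P := pullback_group p1 p2.
Let pP := pullback_fst_morphism p1 p2 p1.
Let D := 'ker pP :&: P^`(1).

Let p1E : p1 @* E1 = X. Proof. by case: (schur_cover_central scp1). Qed.

Let sIm : p1 @* E1 \subset p2 @* E2. Proof. by rewrite p1E p2E. Qed.

Lemma injective_fst_pullback : {in D &, injective (@fst t1 t2)}.
Proof.
have [/andP[_ kerZD] _] := scp1.
have pPE : pP @* P = X by rewrite morphim_pullback_fst.
have kerPZ : 'ker pP \subset 'Z(P).
  apply/subsetP=> q qK; have qP := dom_ker qK; rewrite inE qP.
  have [q1E q2E e] := pullbackP _ _ _ qP.
  have q1K : q.1 \in 'ker p1 by apply/kerP => //; apply: (mker qK).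
  have q2K : q.2 \in 'ker p2 by apply/kerP; rewrite // -e (mker q1K).
  apply: pullback_cent (subsetP kerZ2 _ q2K).
  exact: subsetP (subset_trans kerZD (subsetIl _ _)) _ q1K.
have le_D := schur_cover_card_ker_der scp1 pPE kerPZ.
have kerD : 'ker p1 \subset [set q.1 | q in D].
  apply/subsetP=> a aK.
  have aE' := subsetP (subset_trans kerZD (subsetIr _ _)) a aK.
  have : a \in [morphism of @fst t1 t2] @* P^`(1).
    have fstP : [morphism of @fst t1 t2] @* P = E1 := morphim_fst_pullback sIm.
    by rewrite morphim_der ?subsetT // fstP.
  case/morphimP=> q _ q'P a_q; rewrite a_q in aK *; apply: imset_f.
  rewrite inE q'P andbT; apply/kerP; last exact: (mker aK).
  exact: (subsetP (der_sub 1 _)).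
apply/imset_injP; rewrite eqn_leq leq_imset_card /=.
exact: leq_trans le_D (subset_leq_card kerD).
Qed.

Lemma schur_cover_commute_lift a1 b1 a2 b2 :
  a1 \in E1 -> b1 \in E1 -> a2 \in E2 -> b2 \in E2 ->
  p1 a1 = p2 a2 -> p1 b1 = p2 b2 -> commute a1 b1 -> commute a2 b2.
Proof.
move=> a1E b1E a2E b2E ea eb /commgP/eqP c1.
have aP : (a1, a2) \in P by apply/pullbackP.
have bP : (b1, b2) \in P by apply/pullbackP.
have cD : [~ (a1, a2), (b1, b2)] \in D.
  rewrite inE mem_commg ?andbT //; apply/kerP; first by rewrite groupR.
  by change (p1 [~ a1, b1] = 1); rewrite c1 morph1.
have c12 : [~ (a1, a2), (b1, b2)] = 1.
  by apply: injective_fst_pullback cD (group1 _) _; change ([~ a1, b1] = 1).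
by apply/commgP/eqP; apply: (congr1 snd c12).
Qed.

End SchurCoverCommute.

Lemma deep_adjP (gT tT : finGroupType) (X : {group gT}) (E : {group tT})
    (p : {morphism E >-> gT}) x y :
  schur_cover X p ->
  deep_adj X x y <->
  [/\ x \in X, y \in X, x != y &
      forall a b, a \in E -> b \in E -> p a = x -> p b = y -> commute a b].
Proof.
move=> scp; split=> [[xX yX nxy cX] | [xX yX nxy cE]].
  by split=> //; apply: cX.
split=> // rT F q scq a b aF bF qa qb.
have [qF kerZ] := schur_cover_central scq; have [pE _] := schur_cover_central scp.
move: xX yX; rewrite -{1}pE -{1}pE.
move=> /morphimP[a1 _ a1E pa1] /morphimP[b1 _ b1E pb1].
apply: (schur_cover_commute_lift scp qF kerZ a1E b1E aF bF); rewrite ?qa ?qb //.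
exact: cE.
Qed.

Lemma stem_ext_schur_cover (gT tT hT : finGroupType) (X : {group gT})
    (E : {group tT}) (p : {morphism E >-> gT})
    (F : {group hT}) (sigma : {morphism F >-> gT}) :
  schur_cover X sigma -> stem_ext X p -> #|'ker sigma| <= #|'ker p| ->
  schur_cover X p.
Proof.
move=> [_ max_sigma] stp le_ker; split=> // rT R f stf.
exact: leq_trans (max_sigma _ _ _ stf) le_ker.
Qed.

Section PreimageStem.

Variables (gT tT : finGroupType) (G H : {group gT}) (Gt : {group tT}).
Variable pi : {morphism Gt >-> gT}.
Hypotheses (stG : stem_ext G pi) (sHG : H \subset G).

Let sKG : pi @*^-1 H \subset Gt := morphpre_sub _ _.
Let piK := restrm sKG pi.

Lemma ker_restrm_preim : 'ker piK = 'ker pi.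
Proof. by rewrite ker_restrm; apply/setIidPr; apply: ker_sub_pre. Qed.

Lemma stem_ext_preim : 'ker pi \subset (pi @*^-1 H)^`(1) -> stem_ext H piK.
Proof.
case/andP: stG => /eqP piG kerZD kerK'.
rewrite /stem_ext morphim_restrm setIid morphpreK ?piG // eqxx /=.
rewrite ker_restrm_preim subsetI kerK' andbT subsetI ker_sub_pre /=.
apply: subset_trans (subset_trans kerZD (subsetIl _ _)) _.
exact: subset_trans (subsetIr _ _) (centS sKG).
Qed.

End PreimageStem.

Theorem proposition3p2 (gT tT : finGroupType) (G H : {group gT})
    (Gt : {group tT}) (pi : {morphism Gt >-> gT}) :
  schur_cover G pi ->
  H \proper G ->
  (* M(H) ≅ M(G) : some Schur cover of H has kernel isomorphic to ker pi = iota(M(G)) *)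
  (exists (hT : finGroupType) (Ht : {group hT}) (sigma : {morphism Ht >-> gT}),
      schur_cover H sigma /\ 'ker sigma \isog 'ker pi) ->
  (* iota(M(G)) ⊆ [pi^-1(H), pi^-1(H)] *)
  'ker pi \subset (pi @*^-1 H)^`(1) ->
  (* the subgraph of Delta_D(G) induced on H equals Delta_D(H) *)
  forall x y : gT, x \in H -> y \in H ->
    (deep_adj G x y <-> deep_adj H x y).
Proof.
move=> scG /proper_sub sHG [hT [Ht [sigma [scH /card_isog eq_ker]]]] kerK' x y xH yH.
have sKG : pi @*^-1 H \subset Gt := morphpre_sub pi H.
have scK : schur_cover H (restrm sKG pi).
  apply: stem_ext_schur_cover scH (stem_ext_preim scG.1 sHG kerK') _.
  by rewrite ker_restrm_preim eq_ker.
apply: iff_trans (deep_adjP x y scG) _.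
apply: iff_sym (iff_trans (deep_adjP x y scK) _).
split=> -[xX yX nxy cE]; split; rewrite ?(subsetP sHG) // => a b aE bE pa pb.
  by apply: cE; rewrite ?mem_morphpre ?pa ?pb.
by apply: cE; rewrite ?(subsetP sKG).
Qed.
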